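(* Assume the feature groups $\boldsymbol X_{\mathcal X(1)},\dots,\boldsymbol X_{\mathcal X(M)}$ are mutually independent and $f(\boldsymbol X)=\sum_{m\in S_1}h_m(\boldsymbol X_{\mathcal X(m)})+\sum_{J\in S_2}h_J(\boldsymbol X_{\mathcal X(J)})$, where $S_1\subset\{1,\dots,M\}$, $S_2$ is a collection of two-element subsets of $\{1,\dots,M\}$, $\mathbb Eh_m(\boldsymbol X_{\mathcal X(m)})=0$ for $m\in S_1$, and $\mathbb E(h_J(\boldsymbol X_{\mathcal X(J)})\mid\boldsymbol X_{\mathcal X(l)})=0$ for every $J\in S_2$ and $l\in J$; set $h_J\equiv0$ for $J\notin\{\{m\}:m\in S_1\}\cup S_2$ and $h_m=h_{\{m\}}$. Let $K\ge1$ and let $J_1,\dots,J_{2K}$ be pairwise distinct subsets of $\{1,\dots,M\}$ with $\#J_l=1$ for $l\le K$ and $\#J_l=2$ for $K<l\le 2K$. Define $R_0\equiv0$ and $R_s(\boldsymbol X)=R_{s-1}(\boldsymbol X)+\mathbb E(f(\boldsymbol X)-R_{s-1}(\boldsymbol X)\mid\boldsymbol X_{\mathcal X(J_s)})$. Then for every $0<s\le 2K$, $$R_s(\boldsymbol X)=\sum_{l=1}^sh_{J_l}(\boldsymbol X_{\mathcal X(J_l)})+\sum_{m\in(\bigcup_{k=K+1}^sJ_k)\setminus(\bigcup_{k=1}^KJ_k)}h_m(\boldsymbol X_{\mathcal X(m)}),$$ where a sum over an empty index set is zero.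
   Context: $\boldsymbol X=(X_1,\dots,X_p)^\top$ is a random vector in $\{0,1\}^p$; $\{1,\dots,p\}$ is partitioned into disjoint nonempty feature groups $\mathcal X(1),\dots,\mathcal X(M)$; $\mathcal X(J)=\bigcup_{m\in J}\mathcal X(m)$ and $\boldsymbol X_{\mathcal X(J)}=(X_j)_{j\in\mathcal X(J)}$. The functions $h_J$ are real-valued measurable functions of $\boldsymbol X_{\mathcal X(J)}$. *)

From HB Require Import structures.
From mathcomp Require Export all_boot all_order all_algebra.
Set Implicit Arguments. Unset Strict Implicit. Unset Printing Implicit Defensive.
Export Order.TTheory GRing.Theory Num.Theory.
Local Open Scope ring_scope.

(* Sample space: x : {ffun 'I_p -> bool} is a value of X = (X_1,...,X_p).
   grp : 'I_p -> 'I_M assigns each feature j to its group m (X(m) = grp^-1 m). *)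
Notation cube p := {ffun 'I_p -> bool}.

Definition agree (p M : nat) (grp : 'I_p -> 'I_M) (A : {set 'I_M})
  (x y : cube p) : bool :=
  [forall j : 'I_p, (grp j \in A) ==> (x j == y j)].

Definition fun_of_groups (R : Type) (p M : nat) (grp : 'I_p -> 'I_M)
  (A : {set 'I_M}) (h : cube p -> R) : Prop :=
  forall x y, agree grp A x y -> h x = h y.

Definition is_pmf (R : numDomainType) (p : nat) (P : cube p -> R) : Prop :=
  (forall x, 0 <= P x) /\ \sum_x P x = 1.

(* Mutual independence of the groups X_{X(1)},...,X_{X(M)}: the joint pmf is
   the product of the marginal pmfs of the groups. *)
Definition groups_indep (R : numDomainType) (p M : nat) (grp : 'I_p -> 'I_M)
  (P : cube p -> R) : Prop :=
  forall x, P x = \prod_(m < M) \sum_(y | agree grp [set m] x y) P y.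

Definition expect (R : numDomainType) (p : nat) (P : cube p -> R)
  (g : cube p -> R) : R := \sum_x P x * g x.

(* E(g(X) | X_{X(A)}) evaluated at X = x (meaningful when P(X_{X(A)} = x_{X(A)}) > 0;
   all identities below are asserted only a.s., i.e. at points x with P x > 0). *)
Definition condexp (R : fieldType) (p M : nat) (grp : 'I_p -> 'I_M)
  (P : cube p -> R) (g : cube p -> R) (A : {set 'I_M}) (x : cube p) : R :=
  (\sum_(y | agree grp A x y) P y * g y) / (\sum_(y | agree grp A x y) P y).

Fixpoint Rseq (R : fieldType) (p M : nat) (grp : 'I_p -> 'I_M)
  (P : cube p -> R) (f : cube p -> R) (Js : nat -> {set 'I_M}) (s : nat)
  : cube p -> R :=
  match s with
  | O => fun _ => 0
  | s'.+1 => fun x => Rseq grp P f Js s' x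
        + condexp grp P (fun y => f y - Rseq grp P f Js s' y) (Js s) x
  end.

(* Extend h by zero so that f = \sum_J h_J over all sets of groups J.  The
   orthogonality hypotheses together with independence of the groups give
   E(h_J | X_A) = h_J if J \subset A and 0 otherwise.  By induction, R_s is then
   the sum of h_J over the down-closure of {J_1, ..., J_s}: the step to R_(s+1)
   adds exactly the J \subset J_(s+1) that were not already counted.  Given the
   cardinalities of the J_l, the nonempty members of this down-closure are the
   J_l themselves together with the singletons {m} of groups m occurring in a
   pair J_k (K < k <= s) but in no singleton J_l (l <= K). *)

From mathcomp Require Import all_boot all_order all_algebra zify.
Local Open Scope ring_scope.
Set Implicit Arguments. Unset Strict Implicit.

Section Agree.
Variables (p M : nat) (grp : 'I_p -> 'I_M).
Implicit Types (A B : {set 'I_M}) (x y z : cube p).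

Lemma agreeP A x y :
  reflect (forall j, grp j \in A -> x j = y j) (agree grp A x y).
Proof.
apply: (iffP forallP) => [H j jA | H j]; first exact/eqP/(implyP (H j)).
by apply/implyP => jA; rewrite H.
Qed.

Lemma agree_refl A x : agree grp A x x.
Proof. exact/agreeP. Qed.

Lemma agree_sym A x y : agree grp A x y = agree grp A y x.
Proof. by apply/agreeP/agreeP => H j /H. Qed.

Lemma agree_trans A x y z : agree grp A x y -> agree grp A y z -> agree grp A x z.
Proof. by move=> /agreeP xy /agreeP yz; apply/agreeP => j jA; rewrite xy ?yz. Qed.

Lemma agree_sub A B x y : A \subset B -> agree grp B x y -> agree grp A x y.
Proof. by move=> /subsetP AB /agreeP xy; apply/agreeP => j /AB /xy. Qed.

Lemma agree_set0 x y : agree grp set0 x y.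
Proof. by apply/agreeP => j; rewrite in_set0. Qed.

End Agree.

Section ConditionalExpectation.
Variables (R : numFieldType) (p M : nat) (grp : 'I_p -> 'I_M) (P : cube p -> R).
Hypothesis P_ge0 : forall x, 0 <= P x.
Implicit Types (A B : {set 'I_M}) (x y z : cube p) (g : cube p -> R).

Definition prob_agree A x := \sum_(y | agree grp A x y) P y.

Lemma condexpE g A x :
  condexp grp P g A x = (\sum_(y | agree grp A x y) P y * g y) / prob_agree A x.
Proof. by []. Qed.

Lemma eq_prob_agree A x x' : agree grp A x x' -> prob_agree A x = prob_agree A x'.
Proof.
move=> xx'; apply: eq_bigl => y; apply/idP/idP; last exact: agree_trans.
by apply: agree_trans; rewrite agree_sym.
Qed.

Lemma prob_agree_gt0 A x : 0 < P x -> 0 < prob_agree A x.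
Proof.
move=> Px; rewrite /prob_agree (bigD1 x) ?agree_refl //=.
by rewrite ltr_pwDl // sumr_ge0.
Qed.

Lemma eq_condexp g1 g2 A x : (forall y, 0 < P y -> g1 y = g2 y) ->
  condexp grp P g1 A x = condexp grp P g2 A x.
Proof.
move=> g12; rewrite !condexpE; congr (_ / _); apply: eq_bigr => y _.
by have := P_ge0 y; rewrite le0r => /orP [/eqP ->|/g12 ->]; rewrite ?mul0r.
Qed.

Lemma condexpB g1 g2 A x :
  condexp grp P (fun y => g1 y - g2 y) A x
  = condexp grp P g1 A x - condexp grp P g2 A x.
Proof.
rewrite !condexpE -mulrBl -sumrB; congr (_ / _).
by apply: eq_bigr => y _; rewrite mulrBr.
Qed.

Lemma condexp_sum (I : finType) (D : {pred I}) (G : I -> cube p -> R) A x :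
  condexp grp P (fun y => \sum_(i in D) G i y) A x
  = \sum_(i in D) condexp grp P (G i) A x.
Proof.
rewrite !condexpE -mulr_suml exchange_big /=; congr (_ / _).
by apply: eq_bigr => y _; rewrite mulr_sumr.
Qed.

Lemma condexp_id g A x : fun_of_groups grp A g -> 0 < P x ->
  condexp grp P g A x = g x.
Proof.
move=> gA Px; rewrite condexpE.
have -> : \sum_(y | agree grp A x y) P y * g y = prob_agree A x * g x.
  by rewrite mulr_suml; apply: eq_bigr => y xy; rewrite (gA y x) // agree_sym.
by rewrite mulrAC divff ?mul1r // lt0r_neq0 // prob_agree_gt0.
Qed.

Lemma expect_condexp g A : expect P (condexp grp P g A) = expect P g.
Proof.
have -> : expect P (condexp grp P g A) =
    \sum_x \sum_(y | agree grp A y x) P y * g y * (P x / prob_agree A y).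
  apply: eq_bigr => x _; rewrite condexpE mulrCA mulr_suml.
  by apply: eq_big => [y|y xy]; rewrite 1?agree_sym // (eq_prob_agree xy).
rewrite (exchange_big_dep xpredT) //=; apply: eq_bigr => y _.
rewrite -mulr_sumr -mulr_suml -/(prob_agree A y).
have := P_ge0 y; rewrite le0r => /orP [/eqP ->|Py]; first by rewrite !mul0r.
by rewrite divff ?mulr1 // lt0r_neq0 // prob_agree_gt0.
Qed.

Hypothesis P_sum1 : \sum_x P x = 1.

Lemma condexp_set0 g x : condexp grp P g set0 x = expect P g.
Proof.
rewrite condexpE.
have -> : prob_agree set0 x = 1.
  by rewrite -P_sum1; apply: eq_bigl => y; rewrite agree_set0.
by rewrite divr1; apply: eq_bigl => y; rewrite agree_set0.
Qed.

Hypothesis P_indep : groups_indep grp P.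

Definition swap B y z : cube p := [ffun j => if grp j \in B then y j else z j].

Lemma swapK B y z : swap B (swap B y z) (swap B z y) = y.
Proof. by apply/ffunP => j; rewrite !ffunE; case: (grp j \in B). Qed.

Lemma prob_agree1_swap B m y z :
  prob_agree [set m] (swap B y z) = prob_agree [set m] (if m \in B then y else z).
Proof.
by apply: eq_prob_agree; apply/agreeP => j /set1P jm; rewrite ffunE jm; case: ifP.
Qed.

Lemma P_swap B y z : P (swap B y z) * P (swap B z y) = P y * P z.
Proof.
rewrite (P_indep (swap B y z)) (P_indep (swap B z y)) (P_indep y) (P_indep z).
rewrite -!big_split; apply: eq_bigr => m _ /=.
rewrite -/(prob_agree _ (swap B y z)) -/(prob_agree _ (swap B z y)).
rewrite -/(prob_agree _ y) -/(prob_agree _ z) !prob_agree1_swap.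
by case: ifP => _ //; rewrite mulrC.
Qed.

(* The involution (y, z) |-> (swap B y z, swap B z y) exchanges the two index
   sets, preserves P y * P z by independence, and does not change g y. *)
Lemma prob_agree_cross_setI A B g x : fun_of_groups grp B g ->
  (\sum_(y | agree grp A x y) P y * g y) * prob_agree (A :&: B) x
  = (\sum_(y | agree grp (A :&: B) x y) P y * g y) * prob_agree A x.
Proof.
move=> gB; rewrite /prob_agree !mulr_suml.
under eq_bigr do rewrite mulr_sumr.
under [RHS]eq_bigr do rewrite mulr_sumr.
rewrite !pair_big_dep /=.
pose sw (q : cube p * cube p) := (swap B q.1 q.2, swap B q.2 q.1).
have swK : involutive sw by case=> y z; rewrite /sw /= !swapK.
rewrite (reindex_inj (inv_inj swK)) /=; apply: eq_big => [[y z]|[y z] _] /=.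
  apply/andP/andP => -[/agreeP xy /agreeP xz]; split; apply/agreeP => j.
  - by rewrite inE => /andP[jA jB]; rewrite xy // ffunE jB.
  - move=> jA; case jB: (grp j \in B).
      by rewrite xz ?ffunE ?jB // inE jA jB.
    by rewrite xy ?ffunE ?jB.
  - move=> jA; rewrite ffunE; case: ifP => jB; last exact: xz.
    by rewrite xy // inE jA jB.
  - by rewrite inE => /andP[jA jB]; rewrite ffunE jB xz.
have -> : g (swap B y z) = g y by apply: gB; apply/agreeP => j jB; rewrite ffunE jB.
by rewrite mulrAC P_swap mulrAC.
Qed.

Lemma condexp_setI A B g x : fun_of_groups grp B g -> 0 < P x ->
  condexp grp P g A x = condexp grp P g (A :&: B) x.
Proof.
move=> gB Px; rewrite !condexpE; apply/eqP.
by rewrite eqr_div ?lt0r_neq0 ?prob_agree_gt0 // prob_agree_cross_setI.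
Qed.

End ConditionalExpectation.

Section FiniteSets.
Variable T : finType.
Implicit Types A B : {set T}.

Lemma mem_bigcup_nat (a b : nat) (F : nat -> {set T}) x :
  reflect (exists2 k, (a <= k < b)%N & x \in F k) (x \in \bigcup_(a <= k < b) F k).
Proof.
have -> : (x \in \bigcup_(a <= k < b) F k) = has (fun k => x \in F k) (index_iota a b).
  by elim: (index_iota a b) => [|k r IH]; rewrite ?big_nil ?in_set0 // big_cons in_setU IH.
by apply: (iffP hasP) => -[k]; rewrite ?mem_index_iota; exists k; rewrite ?mem_index_iota.
Qed.

Lemma sum_setU (Z : zmodType) A B (F : T -> Z) :
  \sum_(i in A :|: B) F i = \sum_(i in A) F i + \sum_(i in B) F i - \sum_(i in A :&: B) F i.
Proof.
rewrite [LHS](big_setID A) [X in _ + X - _](big_setID A).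
rewrite setUK setDUl setDv set0U (setIC B A).
by rewrite addrCA addrAC subrr add0r.
Qed.

End FiniteSets.

Section DownClosure.
Variables (T : finType) (K : nat) (Js : nat -> {set T}).

Definition down_closure s := \bigcup_(1 <= l < s.+1) powerset (Js l).

Lemma down_closureP s (J : {set T}) :
  reflect (exists2 l, (0 < l <= s)%N & J \subset Js l) (J \in down_closure s).
Proof.
apply: (iffP (mem_bigcup_nat _ _ _ _)) => -[l ls];
  by rewrite ?powersetE => sJ; exists l; rewrite ?powersetE.
Qed.

Lemma down_closureS s : down_closure s.+1 = down_closure s :|: powerset (Js s.+1).
Proof. by rewrite /down_closure big_nat_recr. Qed.

Lemma down_closure0 : down_closure 0 = set0.
Proof. by rewrite /down_closure big_geq. Qed.

Hypothesis Js_inj : forall l l', (1 <= l <= 2 * K)%N -> (1 <= l' <= 2 * K)%N ->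
  l <> l' -> Js l <> Js l'.
Hypothesis card_Js_le : forall l, (1 <= l <= K)%N -> #|Js l| = 1%N.
Hypothesis card_Js_gt : forall l, (K < l <= 2 * K)%N -> #|Js l| = 2%N.

Definition fitted (s : nat) :=
  [set Js (nat_of_ord l) | l in [set l : 'I_s.+1 | (0 < l)%N]].

Definition unfitted s :=
  (\bigcup_(K.+1 <= k < s.+1) Js k) :\: \bigcup_(1 <= k < K.+1) Js k.

Lemma mem_fitted s (l : nat) : (0 < l <= s)%N -> Js l \in fitted s.
Proof.
case/andP=> l0 ls; apply/imsetP; exists (inord l); last by rewrite inordK.
by rewrite inE inordK.
Qed.

Lemma subset_Js_single l (J : {set T}) :
  (0 < l <= K)%N -> J != set0 -> J \subset Js l -> J = Js l.
Proof.
by move=> lK J0 sJ; apply/eqP; rewrite eqEcard sJ card_Js_le // card_gt0.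
Qed.

Lemma down_closureD0 s : (s <= 2 * K)%N ->
  down_closure s :\ set0 = fitted s :|: [set [set m] | m in unfitted s].
Proof.
move=> s2K; apply/setP => J; rewrite in_setD1 in_setU; apply/andP/orP.
  case=> J0 /down_closureP [l /andP [l0 ls] sJ].
  have [lK | Kl] := leqP l K.
    by left; rewrite (subset_Js_single _ J0 sJ) ?l0 // mem_fitted ?l0.
  have cl : #|Js l| = 2%N by apply: card_Js_gt; lia.
  have [cJ | cJ] := eqVneq #|J| 2%N.
    left; have /eqP -> : J == Js l by rewrite eqEcard sJ cl cJ.
    by rewrite mem_fitted ?l0.
  have /cards1P [m Jm] : #|J| == 1%N.
    move: J0 (subset_leq_card sJ); rewrite -card_gt0 cl; lia.
  have ml : m \in Js l by rewrite -sub1set -Jm.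
  case mV: (m \in \bigcup_(1 <= k < K.+1) Js k).
    left; case/mem_bigcup_nat: mV => k /andP [k0 kK] mk.
    have -> : J = Js k.
      by apply: (subset_Js_single (l := k)); rewrite ?k0 // Jm ?sub1set // -card_gt0 cards1.
    by rewrite mem_fitted //; lia.
  right; apply/imsetP; exists m => //; rewrite inE mV /=.
  by apply/mem_bigcup_nat; exists l; rewrite ?Kl.
case=> [/imsetP [l] | /imsetP [m]].
  rewrite inE => l0 ->; have ls : (l <= s)%N by rewrite -ltnS.
  split; last by apply/down_closureP; exists l; rewrite ?l0.
  rewrite -card_gt0; have [lK | Kl] := leqP l K.
    by rewrite card_Js_le // l0.
  by rewrite card_Js_gt //; lia.
rewrite inE => /andP [_ /mem_bigcup_nat [k /andP [Kk ks] mk]] ->.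
split; first by rewrite -card_gt0 cards1.
by apply/down_closureP; exists k; rewrite ?sub1set //; lia.
Qed.

Lemma sum_down_closure (Z : zmodType) (F : {set T} -> Z) s :
  F set0 = 0 -> (s <= 2 * K)%N ->
  \sum_(J in down_closure s) F J
  = \sum_(1 <= l < s.+1) F (Js l) + \sum_(m in unfitted s) F [set m].
Proof.
move=> F0 s2K.
rewrite (big_setID [set set0]) big1 ?add0r => [|J /setIP [_ /set1P ->] //].
rewrite down_closureD0 // sum_setU.
have -> : fitted s :&: [set [set m] | m in unfitted s] = set0.
  apply/setP => J; rewrite in_setI in_set0; apply/negP.
  case/andP => /imsetP [l] /[!inE] l0 -> /imsetP [m] /[!inE] /andP [mV _] Jlm.
  have [lK | Kl] := leqP l K.
    by move/negP: mV; apply; apply/mem_bigcup_nat; exists l; rewrite ?Jlm ?set11 //; lia.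
  have := ltn_ord l; have := card_Js_gt (l := l); rewrite Jlm cards1; lia.
rewrite big_set0 subr0 [X in _ + X]big_imset => [|m1 m2 _ _ /set1_inj //].
rewrite big_imset /= => [|l l' /[!inE] l0 l'0 Jll'].
  by rewrite add0r big_geq_mkord; congr (_ + _); apply: eq_bigl => i; rewrite inE.
move: (ltn_ord l) (ltn_ord l') => ls l's.
apply/ord_inj/eqP/negPn/negP => /eqP ll'.
by apply: (Js_inj _ _ ll' Jll'); lia.
Qed.

End DownClosure.

Section OrthogonalDecomposition.
Variables (R : numFieldType) (p M : nat) (grp : 'I_p -> 'I_M) (P : cube p -> R).
Variables (S1 : {set 'I_M}) (S2 : {set {set 'I_M}}) (h : {set 'I_M} -> cube p -> R).
Hypothesis P_ge0 : forall x, 0 <= P x.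
Hypothesis P_sum1 : \sum_x P x = 1.
Hypothesis P_indep : groups_indep grp P.
Hypothesis h_fun : forall J, fun_of_groups grp J (h J).
Hypothesis card_S2 : forall J, J \in S2 -> #|J| = 2%N.
Hypothesis h_supp : forall J, J \notin [set [set m] | m in S1] :|: S2 -> forall x, h J x = 0.
Hypothesis expect_h1 : forall m, m \in S1 -> expect P (h [set m]) = 0.
Hypothesis condexp_h2 : forall J l, J \in S2 -> l \in J ->
  forall x, 0 < P x -> condexp grp P (h J) [set l] x = 0.

Lemma singleton_notin_S2 m : [set m] \notin S2.
Proof. by apply/negP => /card_S2; rewrite cards1. Qed.

Lemma h_set0 x : h set0 x = 0.
Proof.
apply: h_supp; rewrite in_setU negb_or; apply/andP; split.
  by apply/imsetP => -[m _ /setP /(_ m)]; rewrite !inE eqxx.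
by apply/negP => /card_S2; rewrite cards0.
Qed.

Lemma sum_h x : \sum_(m in S1) h [set m] x + \sum_(J in S2) h J x = \sum_J h J x.
Proof.
rewrite [RHS](bigID [in [set [set m] | m in S1] :|: S2]) /=.
rewrite [X in _ = _ + X]big1 ?addr0 => [|J /h_supp -> //].
rewrite sum_setU.
have -> : [set [set m] | m in S1] :&: S2 = set0.
  apply/setP => J; rewrite in_setI in_set0; apply/negP.
  by case/andP => /imsetP [m _ ->]; apply/negP/singleton_notin_S2.
by rewrite big_set0 subr0 big_imset // => m1 m2 _ _; apply: set1_inj.
Qed.

Lemma expect_h2 J : J \in S2 -> expect P (h J) = 0.
Proof.
move=> J2; have [l lJ] : exists l, l \in J by apply/card_gt0P; rewrite card_S2.
rewrite -(expect_condexp grp P_ge0 _ [set l]) /expect big1 // => x _.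
have := P_ge0 x; rewrite le0r => /orP [/eqP ->|Px]; first by rewrite mul0r.
by rewrite condexp_h2 ?mulr0.
Qed.

(* By independence E(h_J | X_A) = E(h_J | X_(A :&: J)); when J is not contained
   in A, the set A :&: J is empty or a single point of an interaction J. *)
Lemma condexp_h J A x : 0 < P x ->
  condexp grp P (h J) A x = if J \subset A then h J x else 0.
Proof.
move=> Px; case: ifPn => JA.
  by apply: condexp_id => // y z yz; exact: h_fun (agree_sub JA yz).
have [suppJ | /h_supp h0] := boolP (J \in [set [set m] | m in S1] :|: S2); last first.
  by rewrite condexpE big1 ?mul0r // => y _; rewrite h0 mulr0.
rewrite (condexp_setI P_ge0 P_indep A (@h_fun J) Px).
case/setUP: suppJ JA => [/imsetP [m mS1 ->] JA | J2 JA].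
  have -> : A :&: [set m] = set0.
    by apply/eqP; rewrite setIC setI_eq0 disjoints1 -sub1set.
  by rewrite (condexp_set0 _ P_sum1) expect_h1.
have lt2 : (#|A :&: J| < 2)%N.
  rewrite -(card_S2 J2) proper_card // properEneq subsetIr andbT.
  by apply: contraNneq JA => <-; rewrite subsetIl.
have [/cards0_eq -> | c0] := eqVneq #|A :&: J| 0%N.
  by rewrite (condexp_set0 _ P_sum1) expect_h2.
have /cards1P [l El] : #|A :&: J| == 1%N by lia.
have /setIP [_ lJ] : l \in A :&: J by rewrite El set11.
by rewrite El (condexp_h2 J2).
Qed.

End OrthogonalDecomposition.

Section Backfitting.
Variables (R : numFieldType) (p M : nat) (grp : 'I_p -> 'I_M) (P : cube p -> R).
Variables (f : cube p -> R) (h : {set 'I_M} -> cube p -> R) (Js : nat -> {set 'I_M}).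
Hypothesis P_ge0 : forall x, 0 <= P x.
Hypothesis f_sum : forall x, f x = \sum_J h J x.
Hypothesis condexp_h : forall J A x, 0 < P x ->
  condexp grp P (h J) A x = if J \subset A then h J x else 0.

Lemma condexp_sum_h (D : {set {set 'I_M}}) A x : 0 < P x ->
  condexp grp P (fun y => \sum_(J in D) h J y) A x = \sum_(J in D :&: powerset A) h J x.
Proof.
move=> Px; rewrite condexp_sum big_mkcond [RHS]big_mkcond; apply: eq_bigr => J _.
by rewrite condexp_h // in_setI powersetE; case: (J \in D).
Qed.

Lemma Rseq_down_closure s x : 0 < P x ->
  Rseq grp P f Js s x = \sum_(J in down_closure Js s) h J x.
Proof.
elim: s x => [|s IH] x Px; first by rewrite down_closure0 big_set0.
have fE y : f y = \sum_(J in [set: {set 'I_M}]) h J y.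
  by rewrite f_sum; apply: eq_bigl => J; rewrite inE.
rewrite /= condexpB (eq_condexp grp P_ge0 _ _ (fun y _ => fE y)).
rewrite (eq_condexp grp P_ge0 _ _ IH).
by rewrite !condexp_sum_h // setTI IH // down_closureS sum_setU addrA.
Qed.

End Backfitting.

Theorem mainTheorem11 (R : realFieldType) (p M : nat) (grp : 'I_p -> 'I_M)
  (P : {ffun 'I_p -> bool} -> R)
  (S1 : {set 'I_M}) (S2 : {set {set 'I_M}})
  (h : {set 'I_M} -> {ffun 'I_p -> bool} -> R)
  (f : {ffun 'I_p -> bool} -> R)
  (K : nat) (Js : nat -> {set 'I_M}) :
  (forall m : 'I_M, exists j : 'I_p, grp j = m) ->
  is_pmf P ->
  groups_indep grp P ->
  (forall J, fun_of_groups grp J (h J)) ->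
  (forall J, J \in S2 -> #|J| = 2%N) ->
  (forall J, J \notin [set [set m] | m in S1] :|: S2 -> forall x, h J x = 0) ->
  (forall x, f x = \sum_(m in S1) h [set m] x + \sum_(J in S2) h J x) ->
  (forall m, m \in S1 -> expect P (h [set m]) = 0) ->
  (forall J l, J \in S2 -> l \in J ->
     forall x, 0 < P x -> condexp grp P (h J) [set l] x = 0) ->
  (1 <= K)%N ->
  (forall l l', (1 <= l <= 2 * K)%N -> (1 <= l' <= 2 * K)%N -> l <> l' ->
     Js l <> Js l') ->
  (forall l, (1 <= l <= K)%N -> #|Js l| = 1%N) ->
  (forall l, (K < l <= 2 * K)%N -> #|Js l| = 2%N) ->
  forall s, (0 < s <= 2 * K)%N ->
  forall x, 0 < P x ->
    Rseq grp P f Js s x =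
      \sum_(1 <= l < s.+1) h (Js l) x
      + \sum_(m in (\bigcup_(K.+1 <= k < s.+1) Js k)
                   :\: (\bigcup_(1 <= k < K.+1) Js k)) h [set m] x.
Proof.
move=> _ [P_ge0 P_sum1] P_indep h_fun card_S2 h_supp f_def expect_h1 condexp_h2 _
  Js_inj card_Js_le card_Js_gt s /andP [_ s2K] x Px.
have f_sum y : f y = \sum_J h J y by rewrite f_def (sum_h card_S2 h_supp).
have condexp_hJ := condexp_h P_ge0 P_sum1 P_indep h_fun card_S2 h_supp expect_h1 condexp_h2.
rewrite (Rseq_down_closure Js P_ge0 f_sum condexp_hJ) //.
by rewrite (sum_down_closure Js_inj card_Js_le card_Js_gt) ?(h_set0 card_S2 h_supp).
Qed.
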